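(* Let $\mathsf{CPTP}_n$ be the class of all $n$-qubit quantum channels and let $\varepsilon<1/2$. Any online learner for $\mathsf{CPTP}_n$ makes $\Omega(2^n)$ many $\varepsilon$-mistakes against a worst-case adversary. This remains true even if the adversary is forced to decide on a channel before the interaction with the learner.
   Context: Online learning a class $\mathsf{C}$ of $n$-qubit channels: in each round the adversary presents a channel test operator $E_{A,B}$ (an operator $E_{A,B}\geq0$ on two $n$-qubit systems with $E_{A,B}\leq\sigma_A\otimes\mathbb{1}_B$ for some density operator $\sigma_A$), the learner outputs a prediction in $[0,1]$ based on past information, and then the adversary reveals the true value $\mathrm{Tr}[E_{A,B}C^{\mathcal{N}}_{A,B}]$ for the target channel $\mathcal{N}\in\mathsf{C}$, where $C^{\mathcal{N}}_{A,B}=\sum_{i,j}|i\rangle\langle j|\otimes\mathcal{N}(|i\rangle\langle j|)$. An $\varepsilon$-mistake is a round in which the prediction differs from the true value by more than $\varepsilon$. *)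

From HB Require Import structures.
From mathcomp Require Import all_boot all_order all_algebra.
From mathcomp Require Import reals.
From mathcomp Require Export complex mxtens.

Set Implicit Arguments.
Unset Strict Implicit.
Unset Printing Implicit Defensive.

Import Order.TTheory GRing.Theory Num.Theory.
Local Open Scope ring_scope.

Section QChannels.
Variable R : realType.
Local Notation C := (R[i]).

Definition dag {m p : nat} (A : 'M[C]_(m, p)) : 'M[C]_(p, m) :=
  (map_mx Num.conj A)^T.

Definition psd {m : nat} (A : 'M[C]_m) : Prop :=
  A = dag A /\ forall v : 'cV[C]_m, 0 <= (dag v *m A *m v) 0 0.

Definition loewner {m : nat} (A B : 'M[C]_m) : Prop := psd (B - A).

Definition density {m : nat} (s : 'M[C]_m) : Prop := psd s /\ \tr s = 1.

Definition qdim (n : nat) : nat := 2 ^ n.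

(* channel test operator on A (first factor) and B (second factor) *)
Definition channel_test (n : nat) (E : 'M[C]_(qdim n * qdim n)) : Prop :=
  psd E /\ exists s : 'M[C]_(qdim n), density s /\ loewner E (s *t 1%:M).

Definition blk {k d : nat} (X : 'M[C]_(k * d)) (i j : 'I_k) : 'M[C]_d :=
  \matrix_(a, b) X (mxtens_index (i, a)) (mxtens_index (j, b)).

(* (id_k (x) N) applied to X *)
Definition idtens {k d : nat} (N : 'M[C]_d -> 'M[C]_d) (X : 'M[C]_(k * d))
  : 'M[C]_(k * d) :=
  \matrix_(p, q) N (blk X (mxtens_unindex p).1 (mxtens_unindex q).1)
                   (mxtens_unindex p).2 (mxtens_unindex q).2.

Definition is_channel (n : nat) (N : 'M[C]_(qdim n) -> 'M[C]_(qdim n)) : Prop :=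
  [/\ (forall (a : C) (X Y : 'M[C]_(qdim n)), N (a *: X + Y) = a *: N X + N Y),
      (forall k (X : 'M[C]_(k * qdim n)), psd X -> psd (idtens N X))
    & (forall X, \tr (N X) = \tr X)].

Definition choi (n : nat) (N : 'M[C]_(qdim n) -> 'M[C]_(qdim n))
  : 'M[C]_(qdim n * qdim n) :=
  \sum_(i < qdim n) \sum_(j < qdim n) (delta_mx i j *t N (delta_mx i j)).

(* true value Tr[E C^N] (a real number for channel tests; we take Re) *)
Definition test_value (n : nat) (N : 'M[C]_(qdim n) -> 'M[C]_(qdim n))
  (E : 'M[C]_(qdim n * qdim n)) : R :=
  complex.Re (\tr (E *m choi N)).

(* a (deterministic) online learner: history of (test, revealed value) pairs
   and the current test |-> prediction *)
Definition learner (n : nat) :=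
  seq ('M[C]_(qdim n * qdim n) * R) -> 'M[C]_(qdim n * qdim n) -> R.

Fixpoint mistakes (n : nat) (L : learner n) (N : 'M[C]_(qdim n) -> 'M[C]_(qdim n))
  (eps : R) (h : seq ('M[C]_(qdim n * qdim n) * R))
  (Es : seq 'M[C]_(qdim n * qdim n)) : nat :=
  match Es with
  | [::] => 0%N
  | E :: Es' =>
      let v := test_value N E in
      (nat_of_bool (eps < `|L h E - v|)%R + mistakes L N eps (rcons h (E, v)) Es')%N
  end.

End QChannels.

From HB Require Import structures.
From mathcomp Require Import all_boot all_order all_algebra.
From mathcomp Require Import reals complex mxtens lra.
Import Order.TTheory GRing.Theory Num.Theory.
Local Open Scope ring_scope.
Set Implicit Arguments.
Unset Strict Implicit.
Unset Printing Implicit Defensive.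

(* The relabelling channels X |-> \sum_c X_cc |f c><f c|, for f a map on the
   computational basis, are already hard to learn online.  The test
   |i><i| (x) |a0><a0| has value [f i = a0], and these 2^n bits can be chosen
   independently.  A deterministic learner is simulated on the 2^n tests while
   revealing, at each round, the bit farther from its prediction (0 if the
   prediction is at least 1/2, 1 otherwise); every round is then an
   eps-mistake for eps < 1/2.  As the simulation only involves the learner,
   the map f realising the revealed bits is fixed before the interaction. *)

Section Channels.
Variable R : realType.
Local Notation C := R[i].

Lemma dagM m p q (A : 'M[C]_(m, p)) (B : 'M[C]_(p, q)) :
  dag (A *m B) = dag B *m dag A.
Proof. by rewrite /dag map_mxM trmx_mul. Qed.

Lemma dagK m p (A : 'M[C]_(m, p)) : dag (dag A) = A.
Proof. by apply/matrixP=> i j; rewrite !mxE conjCK. Qed.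

Lemma dagD m p (A B : 'M[C]_(m, p)) : dag (A + B) = dag A + dag B.
Proof. by apply/matrixP=> i j; rewrite !mxE rmorphD. Qed.

Lemma dag0 m p : dag (0 : 'M[C]_(m, p)) = 0.
Proof. by apply/matrixP=> i j; rewrite !mxE rmorph0. Qed.

Lemma dag1 m : dag (1%:M : 'M[C]_m) = 1%:M.
Proof. by rewrite /dag map_mx1 trmx1. Qed.

Lemma dag_delta m p (i : 'I_m) (j : 'I_p) :
  dag (delta_mx i j : 'M[C]_(m, p)) = delta_mx j i.
Proof. by rewrite /dag map_delta_mx trmx_delta. Qed.

Lemma dag_tens m p q r (A : 'M[C]_(m, p)) (B : 'M[C]_(q, r)) :
  dag (A *t B) = dag A *t dag B.
Proof. by apply/matrixP=> i j; rewrite !mxE rmorphM. Qed.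

Lemma psd0 m : psd (0 : 'M[C]_m).
Proof. by split; [rewrite dag0 | move=> v; rewrite mulmx0 mul0mx mxE]. Qed.

Lemma psdD m (A B : 'M[C]_m) : psd A -> psd B -> psd (A + B).
Proof.
move=> [hA fA] [hB fB]; split; first by rewrite dagD -hA -hB.
by move=> v; rewrite mulmxDr mulmxDl mxE addr_ge0.
Qed.

Lemma psd_sum m I (r : seq I) (P : pred I) (F : I -> 'M[C]_m) :
  (forall i, P i -> psd (F i)) -> psd (\sum_(i <- r | P i) F i).
Proof. by move=> h; apply: (big_ind (@psd R m)) => //; [exact: psd0 | exact: psdD]. Qed.

Lemma psd_conj m p (A : 'M[C]_m) (M : 'M[C]_(p, m)) :
  psd A -> psd (M *m A *m dag M).
Proof.
move=> [hA fA]; split; first by rewrite !dagM dagK -hA mulmxA.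
move=> v; rewrite !mulmxA -mulmxA.
have -> : dag v *m M = dag (dag M *m v) by rewrite dagM dagK.
exact: fA.
Qed.

Lemma psd1 m : psd (1%:M : 'M[C]_m).
Proof.
split; first by rewrite dag1.
by move=> v; rewrite mulmx1 mxE sumr_ge0 // => k _; rewrite !mxE -normCKC exprn_ge0.
Qed.

Lemma psd_delta m (i : 'I_m) : psd (delta_mx i i : 'M[C]_m).
Proof.
have -> : delta_mx i i = delta_mx i i *m 1%:M *m dag (delta_mx i i : 'M[C]_m).
  by rewrite mulmx1 dag_delta mul_delta_mx.
exact/psd_conj/psd1.
Qed.

Definition kraus m d (K : 'I_m -> 'M[C]_d) (X : 'M[C]_d) : 'M[C]_d :=
  \sum_c K c *m X *m dag (K c).

Lemma kraus_is_linear m d (K : 'I_m -> 'M[C]_d) a (X Y : 'M[C]_d) :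
  kraus K (a *: X + Y) = a *: kraus K X + kraus K Y.
Proof.
rewrite /kraus scaler_sumr -big_split; apply: eq_bigr => c _.
by rewrite mulmxDr mulmxDl -scalemxAr -scalemxAl.
Qed.

Lemma kraus_tr m d (K : 'I_m -> 'M[C]_d) (X : 'M[C]_d) :
  \sum_c dag (K c) *m K c = 1%:M -> \tr (kraus K X) = \tr X.
Proof.
move=> sumK1; rewrite /kraus raddf_sum /=.
under eq_bigr => c _ do rewrite mxtrace_mulC mulmxA.
by rewrite -raddf_sum -mulmx_suml sumK1 mul1mx.
Qed.

Lemma sum_mxtens_index m n (F : 'I_(m * n) -> C) :
  \sum_p F p = \sum_i \sum_j F (mxtens_index (i, j)).
Proof.
rewrite pair_big (reindex (@mxtens_index m n)) /=.
  by apply: eq_big => // -[].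
by exists (@mxtens_unindex m n) => p _; [exact: mxtens_indexK | exact: mxtens_unindexK].
Qed.

Lemma mul_tens1mxE k d (A : 'M[C]_d) (X : 'M[C]_(k * d, k * d)) i a q :
  ((1%:M *t A) *m X) (mxtens_index (i, a)) q =
  \sum_a' A a a' * X (mxtens_index (i, a')) q.
Proof.
rewrite mxE sum_mxtens_index (bigD1 i) //= addrC big1 ?add0r => [|j ji].
  by apply: eq_bigr => a' _; rewrite tensmxE mxE eqxx mul1r.
by apply: big1 => a' _; rewrite tensmxE mxE eq_sym (negbTE ji) !mul0r.
Qed.

Lemma mulmx_tens1mxE k d (B : 'M[C]_d) (X : 'M[C]_(k * d, k * d)) p j b :
  (X *m (1%:M *t B)) p (mxtens_index (j, b)) =
  \sum_b' X p (mxtens_index (j, b')) * B b' b.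
Proof.
rewrite mxE sum_mxtens_index (bigD1 j) //= addrC big1 ?add0r => [|i ij].
  by apply: eq_bigr => b' _; rewrite tensmxE mxE eqxx mul1r.
by apply: big1 => b' _; rewrite tensmxE mxE (negbTE ij) mul0r mulr0.
Qed.

Lemma idtens_mul k d (A B : 'M[C]_d) (X : 'M[C]_(k * d)) :
  idtens (fun Y => A *m Y *m B) X = (1%:M *t A) *m X *m (1%:M *t B).
Proof.
apply/matrixP=> p q.
case: (mxtens_indexP p) => i a; case: (mxtens_indexP q) => j b.
rewrite mulmx_tens1mxE !mxE !mxtens_indexK /=; apply: eq_bigr => b' _.
rewrite mul_tens1mxE mxE; congr (_ * _); apply: eq_bigr => a' _.
by rewrite mxE.
Qed.

Lemma idtens_sum k d (I : finType) (F : I -> 'M[C]_d -> 'M[C]_d) (X : 'M[C]_(k * d)) :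
  idtens (fun Y => \sum_c F c Y) X = \sum_c idtens (F c) X.
Proof.
by apply/matrixP=> p q; rewrite !mxE !summxE; apply: eq_bigr => c _; rewrite mxE.
Qed.

Lemma idtens_kraus k m d (K : 'I_m -> 'M[C]_d) (X : 'M[C]_(k * d)) :
  idtens (kraus K) X = kraus (fun c => 1%:M *t K c) X.
Proof.
rewrite /kraus (idtens_sum (fun c Y => K c *m Y *m dag (K c))).
by apply: eq_bigr => c _; rewrite idtens_mul dag_tens dag1.
Qed.

Lemma kraus_is_channel n m (K : 'I_m -> 'M[C]_(qdim n)) :
  \sum_c dag (K c) *m K c = 1%:M -> is_channel (kraus K).
Proof.
move=> sumK1; split=> [a X Y | k X psdX | X]; first exact: kraus_is_linear.
  by rewrite idtens_kraus; apply: psd_sum => c _; exact: psd_conj.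
exact: kraus_tr.
Qed.

Definition classical_channel d (f : 'I_d -> 'I_d) : 'M[C]_d -> 'M[C]_d :=
  kraus (fun c => delta_mx (f c) c).

Lemma classical_channel_is_channel n (f : 'I_(qdim n) -> 'I_(qdim n)) :
  is_channel (classical_channel f).
Proof.
apply: kraus_is_channel; rewrite mx1_sum_delta; apply: eq_bigr => c _.
by rewrite dag_delta mul_delta_mx.
Qed.

Lemma classical_channel_delta d (f : 'I_d -> 'I_d) (i : 'I_d) :
  classical_channel f (delta_mx i i) = delta_mx (f i) (f i).
Proof.
rewrite /classical_channel /kraus (bigD1 i) //= addrC big1 ?add0r => [|c ci].
  by rewrite dag_delta !mul_delta_mx.
by rewrite mul_delta_mx_0 ?mul0mx.
Qed.

Lemma tensmx_delta m n p q (i : 'I_m) (j : 'I_n) (a : 'I_p) (b : 'I_q) :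
  delta_mx i j *t delta_mx a b =
  delta_mx (mxtens_index (i, a)) (mxtens_index (j, b)) :> 'M[C]_(m * p, n * q).
Proof.
apply/matrixP=> x y.
case: (mxtens_indexP x) => i' a'; case: (mxtens_indexP y) => j' b'.
rewrite tensmxE !mxE !(inj_eq (can_inj (@mxtens_indexK _ _))) !xpair_eqE.
by rewrite -natrM mulnb andbACA.
Qed.

Lemma tensmx_sumr m n p q (I : finType) (A : 'M[C]_(m, n)) (B : I -> 'M[C]_(p, q)) :
  A *t (\sum_i B i) = \sum_i A *t B i.
Proof.
apply/matrixP=> x y; rewrite mxE summxE summxE mulr_sumr.
by apply: eq_bigr => i _; rewrite mxE.
Qed.

Lemma mxtrace_delta_mul m (p : 'I_m) (A : 'M[C]_m) :
  \tr (delta_mx p p *m A) = A p p.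
Proof.
rewrite -(mul_delta_mx (0 : 'I_1)) -mulmxA mxtrace_mulC -mulmxA -rowE -colE.
by rewrite trace_mx11 !mxE.
Qed.

Definition basis_test d (i a : 'I_d) : 'M[C]_(d * d) := delta_mx i i *t delta_mx a a.

Lemma basis_test_is_test n (i a : 'I_(qdim n)) : channel_test (basis_test i a).
Proof.
rewrite /basis_test tensmx_delta; split; first exact: psd_delta.
exists (delta_mx i i); split; first split; first exact: psd_delta.
  by rewrite -[delta_mx i i]mulmx1 mxtrace_delta_mul mxE eqxx.
rewrite /loewner mx1_sum_delta tensmx_sumr (bigD1 a) //= tensmx_delta addrAC subrr add0r.
by apply: psd_sum => b _; rewrite tensmx_delta; exact: psd_delta.
Qed.

Lemma choiE n (N : 'M[C]_(qdim n) -> 'M[C]_(qdim n)) i j a b :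
  choi N (mxtens_index (i, a)) (mxtens_index (j, b)) = N (delta_mx i j) a b.
Proof.
rewrite /choi summxE (bigD1 i) //= addrC big1 ?add0r => [|i' i'i].
  rewrite summxE (bigD1 j) //= addrC big1 ?add0r => [|j' j'j].
    by rewrite tensmxE mxE !eqxx mul1r.
  by rewrite tensmxE mxE (eq_sym j) (negbTE j'j) andbF mul0r.
rewrite summxE big1 // => j' _.
by rewrite tensmxE mxE (eq_sym i) (negbTE i'i) mul0r.
Qed.

Lemma classical_test_value n (f : 'I_(qdim n) -> 'I_(qdim n)) (i a : 'I_(qdim n)) :
  test_value (classical_channel f) (basis_test i a) = (f i == a)%:R.
Proof.
rewrite /test_value /basis_test tensmx_delta mxtrace_delta_mul choiE.
by rewrite classical_channel_delta mxE andbb eq_sym; case: (f i == a).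
Qed.

End Channels.

Section Contrarian.
Variables (R : realType) (n : nat) (L : learner R n).
Local Notation test := 'M[R[i]]_(qdim n * qdim n).

Definition predicts_high h (E : test) : bool := 1 / 2 <= L h E.

Fixpoint contrarian_run h (Es : seq test) : seq bool :=
  if Es is E :: Es' then
    let b := predicts_high h E in b :: contrarian_run (rcons h (E, (~~ b)%:R)) Es'
  else [::].

Lemma size_contrarian_run h Es : size (contrarian_run h Es) = size Es.
Proof. by elim: Es h => [|E Es IH] h //=; rewrite IH. Qed.

Lemma contrarian_mistake (eps : R) h E :
  eps < 1 / 2 -> eps < `|L h E - (~~ predicts_high h E)%:R|.
Proof.
rewrite /predicts_high => lt_eps; have [high | low] /= := leP (1 / 2) (L h E).
  by rewrite subr0 (lt_le_trans lt_eps) // (le_trans high) // ler_norm.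
rewrite distrC (lt_le_trans lt_eps) // (le_trans _ (ler_norm _)) //; lra.
Qed.

Lemma mistakes_contrarian (N : 'M[R[i]]_(qdim n) -> 'M[R[i]]_(qdim n)) eps h Es :
  eps < 1 / 2 ->
  map (test_value N) Es = [seq (~~ b)%:R | b <- contrarian_run h Es] ->
  mistakes L N eps h Es = size Es.
Proof.
move=> lt_eps; elim: Es h => [|E Es IH] h //= [-> /IH ->].
by rewrite contrarian_mistake.
Qed.

End Contrarian.

Lemma map_nth_enum_ord (T : Type) (x0 : T) m (s : seq T) :
  size s = m -> [seq nth x0 s i | i : 'I_m <- enum 'I_m] = s.
Proof. by move<-; rewrite -[RHS](mkseq_nth x0) /mkseq -val_enum_ord -map_comp. Qed.

Theorem corollary4p3 (R : realType) (eps : R) :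
  0 <= eps < 1 / 2 ->
  exists c : R, 0 < c /\
  exists n0 : nat, forall n : nat, (n0 <= n)%N ->
  forall L : learner R n, (forall h E, 0 <= L h E <= 1) ->
  exists N : 'M[R[i]]_(qdim n) -> 'M[R[i]]_(qdim n),
    is_channel N /\
    exists Es : seq 'M[R[i]]_(qdim n * qdim n),
      (forall E, E \in Es -> channel_test E) /\
      c * (2 ^ n)%:R <= (mistakes L N eps [::] Es)%:R.
Proof.
case/andP=> _ lt_eps; exists 1; split; first exact: ltr01.
exists 1%N => n n_gt0 L _. (* predictions need not lie in [0, 1] *)
have qdim_gt1 : (1 < qdim n)%N by rewrite /qdim -{1}(expn0 2) ltn_exp2l.
pose a0 : 'I_(qdim n) := Ordinal (ltnW qdim_gt1).
pose a1 : 'I_(qdim n) := Ordinal qdim_gt1.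
pose Es := [seq basis_test R i a0 | i <- enum 'I_(qdim n)].
pose bs := contrarian_run L [::] Es.
pose f (i : 'I_(qdim n)) := if nth false bs i then a1 else a0.
exists (classical_channel f); split; first exact: classical_channel_is_channel.
exists Es; split; first by move=> E /mapP [i _ ->]; exact: basis_test_is_test.
rewrite (mistakes_contrarian lt_eps); first by rewrite size_map size_enum_ord mul1r.
rewrite -/bs -[in RHS](map_nth_enum_ord false (_ : size bs = qdim n)); last first.
  by rewrite size_contrarian_run size_map size_enum_ord.
rewrite -!map_comp; apply: eq_map => i /=.
by rewrite classical_test_value /f; case: (nth false bs i).
Qed.
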